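(* Let $k$ be an algebraically closed field and $\alpha,\beta,\gamma$ partitions. (1) For $f,g\in V_{\alpha,\gamma}^\beta(k)$, the relation $(N_\alpha,N_\beta,f)\leq_{\rm deg}(N_\alpha,N_\beta,g)$ holds if and only if $G_g(k)$ is contained in the closure of $G_f(k)$ in $M_\alpha^\beta(k)$. (2) If $\Gamma$ is an LR-tableau of type $(\alpha,\beta,\gamma)$ and $f,g\in V_\Gamma(k)$, then $(N_\alpha,N_\beta,f)\leq_{\rm deg}(N_\alpha,N_\beta,g)$ (degeneration within $V_\Gamma(k)$) holds if and only if $G_g(k)$ is contained in the closure of $G_f(k)$ in $M_\alpha^\beta(k)$.
   Context: For a partition $\alpha$ let $N_\alpha=\bigoplus_ik[T]/(T^{\alpha_i})$. $H_\alpha^\beta(k)=\operatorname{Hom}_k(N_\alpha,N_\beta)$ is an affine space with Zariski topology; $M_\alpha^\beta(k)\subseteq H_\alpha^\beta(k)$ is the closed subset of $k[T]$-homomorphisms; $V_{\alpha,\gamma}^\beta(k)$ is the subset of injective $k[T]$-homomorphisms $f$ with $\operatorname{Coker}f\cong N_\gamma$. The group $\operatorname{Aut}_{k[T]}(N_\alpha)\times\operatorname{Aut}_{k[T]}(N_\beta)$ acts by $(a,h)\cdot f=hfa^{-1}$; $G_f(k)$ is the orbit of $f$. $(N_\alpha,N_\beta,f)\leq_{\rm deg}(N_\alpha,N_\beta,g)$ means $G_g(k)$ lies in the closure of $G_f(k)$ in $V_{\alpha,\gamma}^\beta(k)$ (induced topology). For an LR-tableau $\Gamma$ of type $(\alpha,\beta,\gamma)$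 (a skew Young tableau of shape $\beta\setminus\gamma$ with content determined by $\alpha$ satisfying the Littlewood–Richardson conditions), $V_\Gamma(k)\subseteq V_{\alpha,\gamma}^\beta(k)$ is the set of $f$ whose associated LR-tableau (the tableau recording, for each $i$, the shape of the module $N_\beta/T^i f(N_\alpha)$) is $\Gamma$; it is a union of orbits, and degeneration within $V_\Gamma(k)$ means containment in the closure within $V_\Gamma(k)$. *)

From HB Require Import structures.
From mathcomp Require Import all_boot all_order all_algebra.
From mathcomp Require Import mpoly.
Set Implicit Arguments. Unset Strict Implicit. Unset Printing Implicit Defensive.
Import Order.TTheory GRing.Theory.
Local Open Scope ring_scope.

Definition is_partition (s : seq nat) : bool :=
  sorted geq s && all (fun p => (0 < p)%N) s.

(** Conjugate partition, 0-indexed: [conj s r] = number of parts > r. *)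
Definition conj (s : seq nat) (r : nat) : nat := count (fun p => (r < p)%N) s.

Section Modules.
Variable k : fieldType.

(** Nilpotent Jordan block of size n, acting on row vectors x |-> x *m J:
    e_i |-> e_(i+1), e_(n-1) |-> 0; this is T acting on k[T]/(T^n)
    in the basis 1, T, ..., T^(n-1). *)
Definition jblock (n : nat) : 'M[k]_n := \matrix_(i, j) (j == i.+1 :> nat)%:R.

(** The matrix of T on N_alpha = (+)_i k[T]/(T^(alpha_i)), a k-space of
    dimension sumn alpha (block diagonal). *)
Fixpoint Tmx (s : seq nat) : 'M[k]_(sumn s) :=
  match s return 'M[k]_(sumn s) with
  | [::] => 0
  | n :: s' => block_mx (jblock n) 0 0 (Tmx s')
  end.

(** H_alpha^beta = Hom_k(N_alpha, N_beta): matrices F : 'M_(|alpha|,|beta|),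
    f(x) = x *m F. *)
Definition homk (a b : seq nat) := 'M[k]_(sumn a, sumn b).

Definition zclosed (m n : nat) (C : 'M[k]_(m, n) -> Prop) : Prop :=
  exists P : {mpoly k[m * n]} -> Prop,
    forall F, C F <-> (forall p, P p -> p.@[fun i => mxvec F 0 i] = 0).

(** Closure of S in the subset Y, with the induced Zariski topology:
    the intersection of all relatively closed sets Y /\ C containing S. *)
Definition closure_in (m n : nat) (Y S : 'M[k]_(m, n) -> Prop) (F : 'M[k]_(m, n))
  : Prop :=
  Y F /\ forall C, zclosed C -> (forall G, S G -> Y G -> C G) -> C F.

(** M_alpha^beta: k[T]-linear maps. *)
Definition Mhom (a b : seq nat) (F : homk a b) : Prop :=
  Tmx a *m F = F *m Tmx b.

Definition Aut (a : seq nat) (A : 'M[k]_(sumn a)) : Prop :=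
  A \in unitmx /\ Tmx a *m A = A *m Tmx a.

Definition orbit (a b : seq nat) (F : homk a b) (G : homk a b) : Prop :=
  exists (A : 'M[k]_(sumn a)) (H : 'M[k]_(sumn b)),
    Aut A /\ Aut H /\ G = invmx A *m F *m H.

(** N_beta / U (U a T-stable subspace given by the row space of a matrix)
    is isomorphic as a k[T]-module to N_lambda: there is a surjective
    k[T]-linear map N_beta -> N_lambda whose kernel is U. *)
Definition quot_iso (b : seq nat) (p : nat) (U : 'M[k]_(p, sumn b))
  (lam : seq nat) : Prop :=
  exists P : 'M[k]_(sumn b, sumn lam),
    Tmx b *m P = P *m Tmx lam /\ row_full P /\ (kermx P == U)%MS.

(** V_{alpha,gamma}^beta: injective k[T]-homomorphisms with cokernel ~ N_gamma. *)
Definition Vset (a b c : seq nat) (F : homk a b) : Prop :=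
  Mhom F /\ row_free F /\ quot_iso F c.

(** LR-tableaux of type (alpha, beta, gamma), encoded by the chain of shapes
    Gam = [:: lam^0; ...; lam^m] (lam^i = type of N_beta / T^i f(N_alpha),
    parts = Jordan block sizes; nth beta Gam i = beta for i >= m).  The boxes
    with entry i+1 form the skew diagram lam^(i+1) \ lam^i.  Following
    Ringel--Schmidt, diagrams are drawn with the parts as columns; written in
    terms of conjugate partitions mu^i = (lam^i)' (rows) the conditions are the
    usual ones: mu^0 = gamma', final shape beta', each mu^(i+1)\mu^i is a
    horizontal strip, entry j occurs alpha'_j times, and the reading word is a
    lattice permutation. *)
Definition LR_tableau (a b c : seq nat) (Gam : seq (seq nat)) : Prop :=
  let lam i := nth b Gam i in
  let mu i r := conj (lam i) r in
  [/\ Gam != [::], all is_partition Gam, lam 0%N = c & lam (size Gam).-1 = b] /\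
  (forall i r, mu i r <= mu i.+1 r /\ mu i.+1 r.+1 <= mu i r)%N /\
  (forall l, sumn (lam l.+1) - sumn (lam l) = conj a l)%N /\
  (forall l r, \sum_(s < r.+1) (mu l.+2 s - mu l.+1 s)
               <= \sum_(s < r) (mu l.+1 s - mu l s))%N.

Definition VGam (a b c : seq nat) (Gam : seq (seq nat)) (F : homk a b) : Prop :=
  Vset c F /\ forall i : nat, quot_iso (F *m Tmx b ^+ i) (nth b Gam i).

Definition deg_in (a b : seq nat) (Y : homk a b -> Prop) (F G : homk a b) : Prop :=
  forall X, orbit G X -> closure_in Y (orbit F) X.

End Modules.

From Pilot Require Import Defs.
From HB Require Import structures.
From mathcomp Require Import all_boot all_order all_algebra.
From mathcomp Require Import mpoly.
Set Implicit Arguments. Unset Strict Implicit. Unset Printing Implicit Defensive.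
Import GRing.Theory.
Local Open Scope ring_scope.

(** Both sets V and V_Gamma are unions of orbits lying inside M.  If
    Y ⊆ M is a union of orbits and f, g ∈ Y, then G_f ⊆ Y, so the closed
    subsets of Y containing G_f are exactly the traces on Y of the closed
    subsets of M containing G_f; as G_g ⊆ Y as well, G_g lies in the closure
    of G_f in Y iff it lies in its closure in M. *)

Section ClosureIn.
Variables (k : fieldType) (m n : nat).
Implicit Types Y M S : 'M[k]_(m, n) -> Prop.

Lemma closure_in_sub Y M S X :
  (forall G, S G -> Y G) -> (forall G, Y G -> M G) ->
  closure_in Y S X <-> Y X /\ closure_in M S X.
Proof.
move=> SY YM; split.
- move=> [YX clX]; split=> //; split; first exact: YM.
  by move=> C zC SC; apply: clX => // G SG YG; apply: SC; last exact: YM.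
- move=> [YX [_ clX]]; split=> // C zC SC.
  by apply: clX => // G SG _; apply: SC; last exact: SY.
Qed.

End ClosureIn.

Lemma deg_in_sub (k : fieldType) (a b : seq nat) (Y M : homk k a b -> Prop)
    (F G : homk k a b) :
  (forall Z X, Y Z -> Defs.orbit Z X -> Y X) -> (forall X, Y X -> M X) ->
  Y F -> Y G -> (deg_in Y F G <-> deg_in M F G).
Proof.
move=> Yorb YM YF YG.
have closureE X := closure_in_sub X (fun X => Yorb F X YF) YM.
split=> degFG X orbGX.
- by case/closureE: (degFG X orbGX).
- by apply/closureE; split; [exact: Yorb orbGX | exact: degFG].
Qed.

Section OrbitInvariance.
Variable k : fieldType.

Lemma comm_mx_invmx n (T A : 'M[k]_n) :
  A \in unitmx -> comm_mx T A -> comm_mx T (invmx A).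
Proof.
move=> uA TA; rewrite /comm_mx -[T *m _]mul1mx -(mulVmx uA) -!mulmxA.
by rewrite (mulmxA A) -TA -mulmxA mulmxV // mulmx1.
Qed.

Lemma comm_mxX n (T A : 'M[k]_n) i : comm_mx A T -> comm_mx A (T ^+ i).
Proof. by move=> AT; apply: commrX. Qed.

Lemma Aut_invmx (a : seq nat) (A : 'M[k]_(sumn a)) : Aut A -> Aut (invmx A).
Proof. by move=> [uA TA]; split; [rewrite unitmx_inv | exact: comm_mx_invmx]. Qed.

Lemma kermx_invmxM n p (H : 'M[k]_n) (P : 'M[k]_(n, p)) :
  H \in unitmx -> (kermx (invmx H *m P) == kermx P *m H)%MS.
Proof.
move=> uH; apply/andP; split.
- have : (kermx (invmx H *m P) *m invmx H <= kermx P)%MS.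
    by apply/sub_kermxP; rewrite -mulmxA mulmx_ker.
  by move/(submxMr H); rewrite -mulmxA mulVmx // mulmx1.
- by apply/sub_kermxP; rewrite -mulmxA (mulmxA H) mulmxV // mul1mx mulmx_ker.
Qed.

Lemma quot_iso_mulmx (b : seq nat) p (U : 'M[k]_(p, sumn b)) lam
    (B : 'M[k]_p) (H : 'M[k]_(sumn b)) :
  B \in unitmx -> Aut H -> quot_iso U lam -> quot_iso (B *m U *m H) lam.
Proof.
move=> uB [uH TH] [P [TP [fullP kerP]]].
exists (invmx H *m P); split; [|split].
- by rewrite mulmxA (comm_mx_invmx uH TH) -mulmxA TP mulmxA.
- by rewrite /row_full (eqmxMfull P) ?row_full_unit ?unitmx_inv.
- apply/eqmxP/(eqmx_trans (eqmxP (kermx_invmxM P uH))).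
  apply: eqmx_trans (eqmxMr H (eqmxP kerP)) _.
  by apply: eqmx_sym; rewrite -mulmxA; apply: eqmxMfull; rewrite row_full_unit.
Qed.

Section Orbit.
Variables (a b c : seq nat) (A : 'M[k]_(sumn a)) (H : 'M[k]_(sumn b)).
Hypotheses (autA : Aut A) (autH : Aut H).

Lemma Mhom_mulmx (F : homk k a b) : Mhom F -> Mhom (A *m F *m H).
Proof.
case: autA autH => [_ TA] [_ TH] TF.
by rewrite /Mhom !mulmxA TA -(mulmxA A) TF -!mulmxA TH.
Qed.

Lemma Vset_mulmx (F : homk k a b) : Vset c F -> Vset c (A *m F *m H).
Proof.
case: autA autH => [uA _] [uH _] [homF [freeF isoF]]; split; [|split].
- exact: Mhom_mulmx.
- by rewrite /row_free mxrankMfree ?row_free_unit // (eqmxMfull F) ?row_full_unit.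
- exact: quot_iso_mulmx.
Qed.

Lemma VGam_mulmx Gam (F : homk k a b) : VGam c Gam F -> VGam c Gam (A *m F *m H).
Proof.
move=> [VF isoF]; split=> [|i]; first exact: Vset_mulmx.
have THi : comm_mx H (Tmx k b ^+ i) by apply: comm_mxX; case: autH.
rewrite -mulmxA THi !mulmxA -(mulmxA A).
by apply: quot_iso_mulmx => //; case: autA.
Qed.

End Orbit.

Lemma orbit_mulmx (a b : seq nat) (P : homk k a b -> Prop) :
  (forall A H, Aut A -> Aut H -> forall F, P F -> P (A *m F *m H)) ->
  forall Z X, P Z -> Defs.orbit Z X -> P X.
Proof.
move=> PM Z X PZ [A [H [autA [autH ->]]]].
exact: PM _ _ (Aut_invmx autA) autH _ PZ.
Qed.

End OrbitInvariance.

Theorem lemma3p2 (k : closedFieldType) (a b c : seq nat) :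
  is_partition a -> is_partition b -> is_partition c ->
  (forall F G : homk k a b, Vset c F -> Vset c G ->
     (deg_in (Vset c) F G <-> deg_in (@Mhom k a b) F G)) /\
  (forall (Gam : seq (seq nat)) (F G : homk k a b),
     LR_tableau a b c Gam -> VGam c Gam F -> VGam c Gam G ->
     (deg_in (VGam c Gam) F G <-> deg_in (@Mhom k a b) F G)).
Proof.
move=> _ _ _; split.
- move=> F G VF VG; apply: (deg_in_sub (Y := Vset c)) => // [|X []//].
  exact: orbit_mulmx (@Vset_mulmx k a b c).
- move=> Gam F G _ VF VG; apply: (deg_in_sub (Y := VGam c Gam)) => // [|X [[]]//].
  exact: orbit_mulmx (fun A H autA autH => @VGam_mulmx k a b c A H autA autH Gam).
Qed.
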